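(* Consider a run of Algorithm 1 (described in the context) against an adversary making at most $C$ corruptions. The total absolute loss $\sum |f(x_t)-q_t|$ over all rounds $t$ lying in correcting intervals is at most $L\cdot O(C)$, with an absolute constant.
   Context: Problem. Fix $L>0$ and $T\ge 2$. An adversary fixes an unknown $L$-Lipschitz $f:[0,1]\to[0,L]$. In each round $t=1,\dots,T$: the adversary chooses $x_t\in[0,1]$; the learner observes $x_t$ and guesses $q_t$; the adversary observes $q_t$ and sends $\sigma_t\in\{0,1\}$, equal to $\sigma(q_t-f(x_t))$ in uncorrupted rounds and $1-\sigma(q_t-f(x_t))$ in corrupted rounds, where $\sigma(u)=1$ if $u>0$ and $0$ if $u\le 0$; the adversary chooses adaptively which rounds to corrupt, at most $C$ in total ($C$ unknown to the learner). The absolute loss of round $t$ is $|f(x_t)-q_t|$. $\mathtt{len}(I)$ is the length of an interval $I$. $\mathtt{MidpointQuery}(I,Y)$, $Y=[a,b]$: guess $q=(a+b)/2$; if $\sigma_t=1$ return $Y\cap[0,q+L\,\mathtt{len}(I)]$, if $\sigma_t=0$ return $Y\cap[q-L\,\mathtt{len}(I),L]$. Algorithm 1. Maintain a partition of $[0,1]$ into intervals; each $I_j$ carries a checking interval $S_j$, range $Y_j$, and a ''dubious'' flag (initially unset). Initially: $8$ intervals of length $1/8$ (the root intervals), each with $S_j=Y_j=[0,L]$. In round $t$, with $I_j$ the partition interval containing $x_t$: (i) if some endpoint of $S_j$ has not been guessed in a round whose context lay in $I_j$, guess such an endpoint; if the guess was $\min(S_j)$ with $\sigma_t=1$ or $\max(S_j)$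 with $\sigma_t=0$, mark $I_j$ dubious; once both endpoints have been queried, set $Y_j=[0,L]$ if dubious and otherwise $Y_j=[\min(S_j)-L\,\mathtt{len}(I_j),\max(S_j)+L\,\mathtt{len}(I_j)]\cap[0,L]$. (ii) Otherwise set $Y_j:=\mathtt{MidpointQuery}(I_j,Y_j)$; if then $\mathtt{len}(Y_j)<\max(4L\,\mathtt{len}(I_j),4L/T)$, bisect $I_j$ into its two halves (its children, of which $I_j$ is the parent), which replace it, each with checking interval equal to the current $Y_j$ (endpoints unqueried, not dubious). Interval types. Say a round $t$ lies in $I_j$ if $I_j$ is the partition interval containing $x_t$ at round $t$. An interval $I_j$ is corrupted if some round lying in $I_j$ has a corrupted signal; it is correcting if its parent is corrupted and every round lying in $I_j$ is uncorrupted. *)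

From Stdlib Require Import Reals List Bool Arith.
Open Scope R_scope.

Definition Rleb (a b : R) : bool := if Rle_dec a b then true else false.
Definition Rltb (a b : R) : bool := if Rlt_dec a b then true else false.
Definition Reqb (a b : R) : bool := if Req_EM_T a b then true else false.

(* sigma(u) = 1 if u > 0, 0 if u <= 0 ; 1 is encoded as true *)
Definition sgn01 (u : R) : bool := Rltb 0 u.

(* A partition interval of Algorithm 1.  It is the dyadic interval
   [idx / 2^dep, (idx+1) / 2^dep]; it carries a checking interval
   S = [Slo, Shi], a range Y = [Ylo, Yhi], flags recording whether
   min(S) / max(S) have been guessed in a round lying in it, and the
   "dubious" flag. *)
Record ival := mkI {
  dep : nat; idx : nat;
  Slo : R; Shi : R;
  Ylo : R; Yhi : R;
  qlo : bool; qhi : bool;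
  dub : bool }.

Definition key (J0 : ival) : nat * nat := (dep J0, idx J0).
Definition key_eqb (a b : nat * nat) : bool :=
  Nat.eqb (fst a) (fst b) && Nat.eqb (snd a) (snd b).

Definition ilen (J0 : ival) : R := / (2 ^ dep J0).
Definition ileft (J0 : ival) : R := INR (idx J0) * ilen J0.

(* The partition of [0,1] consists of half-open intervals [a,b),
   the last one [a,1] being closed. *)
Definition icontains (J0 : ival) (u : R) : bool :=
  (Rleb (ileft J0) u && Rltb u (ileft J0 + ilen J0))
  || (Reqb u 1 && Reqb (ileft J0 + ilen J0) 1).

Definition init_state (L : R) : list ival :=
  map (fun i => mkI 3 i 0 L 0 L false false false) (seq 0 8).

Definition replace_ival (k : nat * nat) (new : list ival) (st : list ival)
  : list ival :=
  flat_map (fun J => if key_eqb (key J) k then new else J :: nil) st.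

(* Processing round with context u, corruption bit c, for the unknown f.
   Returns (guess q_t, key of the interval the round lies in, new state). *)
Definition process (L : R) (T : nat) (f : R -> R) (J0 : ival) (u : R) (c : bool)
  (st : list ival) : R * (nat * nat) * list ival :=
  let len := ilen J0 in
  let signal q := xorb (sgn01 (q - f u)) c in
  if negb (qlo J0) || negb (qhi J0) then
    (* step (i): checking phase *)
    let '(q, lo', hi', d') :=
      if negb (qlo J0) then
        let q := Slo J0 in (q, true, qhi J0, dub J0 || signal q)
      else
        let q := Shi J0 in (q, qlo J0, true, dub J0 || negb (signal q)) in
    let '(yl, yh) :=
      if lo' && hi' then
        (if d' then (0, L)
         else (Rmax (Slo J0 - L * len) 0, Rmin (Shi J0 + L * len) L))
      else (Ylo J0, Yhi J0) in
    let J0' := mkI (dep J0) (idx J0) (Slo J0) (Shi J0) yl yh lo' hi' d' in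
    (q, key J0, replace_ival (key J0) (J0' :: nil) st)
  else
    (* step (ii): MidpointQuery, then possibly bisect *)
    let q := (Ylo J0 + Yhi J0) / 2 in
    let '(yl, yh) :=
      if signal q then (Rmax (Ylo J0) 0, Rmin (Yhi J0) (q + L * len))
      else (Rmax (Ylo J0) (q - L * len), Rmin (Yhi J0) L) in
    if Rltb (yh - yl) (Rmax (4 * L * len) (4 * L / INR T)) then
      let c1 := mkI (S (dep J0)) (2 * idx J0) yl yh yl yh false false false in
      let c2 := mkI (S (dep J0)) (S (2 * idx J0)) yl yh yl yh false false false in
      (q, key J0, replace_ival (key J0) (c1 :: c2 :: nil) st)
    else
      let J0' := mkI (dep J0) (idx J0) (Slo J0) (Shi J0) yl yh true true (dub J0) in
      (q, key J0, replace_ival (key J0) (J0' :: nil) st).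

Definition round (L : R) (T : nat) (f : R -> R) (st : list ival) (u : R)
  (c : bool) : R * (nat * nat) * list ival :=
  match find (fun J0 => icontains J0 u) st with
  | Some J0 => process L T f J0 u c st
  | None => (0, (0%nat, 0%nat), st)  (* unreachable: st partitions [0,1] *)
  end.

(* State after n rounds; round t (t >= 1) uses context x t and
   corruption indicator corr t. *)
Fixpoint run (L : R) (T : nat) (f : R -> R) (x : nat -> R)
  (corr : nat -> bool) (n : nat) : list ival :=
  match n with
  | O => init_state L
  | S m => let '(_, _, st') := round L T f (run L T f x corr m) (x n) (corr n)
           in st'
  end.

Definition guess L T f x corr (t : nat) : R :=
  let '(q, _, _) := round L T f (run L T f x corr (t - 1)) (x t) (corr t) in q.

Definition lies_in L T f x corr (t : nat) : nat * nat :=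
  let '(_, k, _) := round L T f (run L T f x corr (t - 1)) (x t) (corr t) in k.

Definition rounds (T : nat) : list nat := seq 1 T.

Definition corrupted L T f x corr (k : nat * nat) : bool :=
  existsb (fun t => key_eqb (lies_in L T f x corr t) k && corr t) (rounds T).

(* J0 = (k,i) is correcting: it is not a root interval (so it has a parent
   (k-1, i/2)), its parent is corrupted, and all rounds lying in it are
   uncorrupted. *)
Definition correcting L T f x corr (k : nat * nat) : bool :=
  Nat.ltb 3 (fst k)
  && corrupted L T f x corr (pred (fst k), Nat.div2 (snd k))
  && forallb (fun t => negb (key_eqb (lies_in L T f x corr t) k) || negb (corr t))
       (rounds T).

Definition num_corruptions (T : nat) (corr : nat -> bool) : nat :=
  length (filter corr (rounds T)).

Definition correcting_loss L T f x corr : R :=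
  fold_right Rplus 0
    (map (fun t => if correcting L T f x corr (lies_in L T f x corr t)
                   then Rabs (f (x t) - guess L T f x corr t) else 0)
         (rounds T)).

From Stdlib Require Import Reals List Bool Arith Lia Lra Permutation.
Open Scope R_scope.

(* A potential argument.  Whether an interval is correcting is a property of
   the whole run, so fix it with hindsight and let Psi be the sum, over the
   current partition, of [potential L J] for the correcting intervals [J] plus
   a reserve [12 L] for every interval that has already had a corrupted round.
   Psi starts at 0, since root intervals are never correcting, and stays
   nonnegative.  A round in a correcting interval is uncorrupted, hence its
   answer is truthful and the potential of the interval drops by at least the
   loss of the round.  A corrupted round raises Psi by at most [12 L].  A
   bisection creates two children of potential [6 L] each, but a child can
   only be correcting if its parent is corrupted, and then the parent's
   reserve, which leaves Psi with the parent, pays for both.  Hence the loss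
   in correcting intervals is at most [12 L C]. *)

Ltac minmax_lra :=
  unfold Rmax, Rmin in *; repeat destruct Rle_dec as [?|?%Rnot_le_lt]; lra.

Lemma ilen_gt0 J : 0 < ilen J.
Proof. apply Rinv_0_lt_compat, pow_lt; lra. Qed.

Lemma ilen_le_eighth J : (3 <= dep J)%nat -> ilen J <= / 8.
Proof.
  intros Hd. apply Rinv_le_contravar; [lra|].
  replace 8 with (2 ^ 3) by (simpl; lra). apply Rle_pow; [lra|exact Hd].
Qed.

Definition in_ival (J : ival) (u : R) : Prop := ileft J <= u <= ileft J + ilen J.

Lemma icontains_in_ival J u : icontains J u = true -> in_ival J u.
Proof.
  unfold icontains, in_ival, Rleb, Rltb, Reqb. pose proof (ilen_gt0 J).
  destruct Rle_dec, Rlt_dec, Req_EM_T, Req_EM_T; simpl; intros; try discriminate; lra.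
Qed.

Lemma sgn01_true a : sgn01 a = true -> 0 < a.
Proof. unfold sgn01, Rltb. destruct Rlt_dec; congruence. Qed.

Lemma sgn01_false a : sgn01 a = false -> a <= 0.
Proof. unfold sgn01, Rltb. destruct Rlt_dec; [discriminate|lra]. Qed.

Lemma Rabs_sub_le_bound a b L : 0 <= a <= L -> 0 <= b <= L -> Rabs (a - b) <= L.
Proof. intros. apply Rabs_le. lra. Qed.

Definition within (L : R) (J : ival) : Prop :=
  0 <= Slo J <= L /\ 0 <= Shi J <= L /\ 0 <= Ylo J <= L /\ 0 <= Yhi J <= L.

Definition unqueried (J : ival) : Prop := qlo J = false /\ qhi J = false.

(* What the answers received in [J] establish about [f] when none of them was
   corrupted: an endpoint of [S] answered without making [J] dubious is
   attained on the correct side somewhere in [J], and once both endpoints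
   are answered the range [Y] encloses [f] on [J]. *)
Definition consistent (f : R -> R) (J : ival) : Prop :=
  (qlo J = true -> dub J = false ->
     exists u, 0 <= u <= 1 /\ in_ival J u /\ Slo J <= f u) /\
  (qhi J = true -> dub J = false ->
     exists u, 0 <= u <= 1 /\ in_ival J u /\ f u < Shi J) /\
  (qlo J = true -> qhi J = true ->
     forall u, 0 <= u <= 1 -> in_ival J u -> Ylo J <= f u <= Yhi J).

Lemma unqueried_consistent f J : unqueried J -> consistent f J.
Proof. intros [Hlo Hhi]. unfold consistent. rewrite Hlo, Hhi. repeat split; discriminate. Qed.

(* Each uncorrupted round in [J] lowers this by at least its loss: an endpoint
   query by [L], a midpoint query through the halving of [Y]. *)
Definition potential (L : R) (J : ival) : R :=
  (if qlo J then 0 else L) + (if qhi J then 0 else L) +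
  (if qlo J && qhi J then 4 * Rmax (Yhi J - Ylo J) (4 * L * ilen J) else 4 * L).

Lemma potential_ge0 L J : 0 < L -> 0 <= potential L J.
Proof.
  intros HL. pose proof (ilen_gt0 J). pose proof (Rmax_r (Yhi J - Ylo J) (4 * L * ilen J)).
  assert (0 < 4 * L * ilen J) by (apply Rmult_lt_0_compat; lra).
  unfold potential. destruct (qlo J), (qhi J); simpl; lra.
Qed.

Lemma potential_unqueried L J : unqueried J -> potential L J = 6 * L.
Proof. intros [Hlo Hhi]. unfold potential. rewrite Hlo, Hhi. simpl. lra. Qed.

Lemma potential_checked_le L J : 0 < L -> (3 <= dep J)%nat -> qlo J = true -> qhi J = true ->
  0 <= Ylo J <= L -> 0 <= Yhi J <= L -> potential L J <= 4 * L.
Proof.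
  intros HL Hd Hlo Hhi Hyl Hyh. pose proof (ilen_le_eighth J Hd).
  unfold potential. rewrite Hlo, Hhi. simpl.
  assert (Rmax (Yhi J - Ylo J) (4 * L * ilen J) <= L) by (apply Rmax_lub; nra). lra.
Qed.

Lemma potential_answer_drop L J J' : 0 < L -> (3 <= dep J')%nat ->
  0 <= Ylo J' <= L -> 0 <= Yhi J' <= L ->
  (qlo J = false /\ qlo J' = true /\ qhi J' = qhi J) \/
  (qhi J = false /\ qhi J' = true /\ qlo J' = qlo J) ->
  potential L J' + L <= potential L J.
Proof.
  intros HL Hd Hyl Hyh Hans.
  assert (Hchk : qlo J' = true -> qhi J' = true -> potential L J' <= 4 * L)
    by (intros; apply potential_checked_le; auto).
  revert Hchk. unfold potential.
  destruct Hans as [(-> & -> & ->)|(-> & -> & ->)];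
    [destruct (qhi J)|destruct (qlo J)]; simpl; intros Hchk;
    try specialize (Hchk eq_refl eq_refl); lra.
Qed.

Lemma midpoint_potential_drop a a' m l : 0 < m ->
  l <= a / 2 -> a' <= a / 2 + m -> 4 * m <= a' ->
  l + 4 * Rmax a' (4 * m) <= 4 * Rmax a (4 * m).
Proof. intros. minmax_lra. Qed.

(* The range returned by [MidpointQuery] on [Y = [a, b]] for signal [s],
   where [m] is [L len(I)]. *)
Definition midpoint_update (L m a b : R) (s : bool) : R * R :=
  if s then (Rmax a 0, Rmin b ((a + b) / 2 + m))
  else (Rmax a ((a + b) / 2 - m), Rmin b L).

Lemma midpoint_update_within L m a b s yl yh : 0 <= m -> 0 <= a <= L -> 0 <= b <= L ->
  midpoint_update L m a b s = (yl, yh) -> 0 <= yl <= L /\ 0 <= yh <= L.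
Proof. intros Hm Ha Hb E. destruct s; injection E as <- <-; minmax_lra. Qed.

Lemma midpoint_update_sound L m a b w yl yh : 0 <= a -> b <= L -> a <= w <= b ->
  midpoint_update L m a b (sgn01 ((a + b) / 2 - w)) = (yl, yh) ->
  yh - yl <= (b - a) / 2 + m /\
  forall v, a <= v <= b -> w - m <= v <= w + m -> yl <= v <= yh.
Proof.
  intros Ha Hb Hw E. unfold midpoint_update in E.
  destruct (sgn01 _) eqn:Es; injection E as <- <-;
    [apply sgn01_true in Es|apply sgn01_false in Es]; split; intros; minmax_lra.
Qed.

Definition checked_range (L m lo hi : R) (d : bool) : R * R :=
  if d then (0, L) else (Rmax (lo - m) 0, Rmin (hi + m) L).

Lemma checked_range_within L m lo hi d yl yh : 0 < L -> 0 <= m ->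
  0 <= lo <= L -> 0 <= hi <= L ->
  checked_range L m lo hi d = (yl, yh) -> 0 <= yl <= L /\ 0 <= yh <= L.
Proof. intros HL Hm Hlo Hhi E. destruct d; injection E as <- <-; minmax_lra. Qed.

Definition step_outcome (L : R) (f : R -> R) (J0 : ival) (u : R) (c : bool) (q : R)
  (new : list ival) : Prop :=
  (exists J', new = J' :: nil /\ key J' = key J0 /\
     (c = false -> consistent f J0 -> 0 <= u <= 1 -> in_ival J0 u ->
        consistent f J' /\ Rabs (f u - q) + potential L J' <= potential L J0))
  \/ (exists c1 c2, new = c1 :: c2 :: nil /\
       key c1 = (S (dep J0), 2 * idx J0)%nat /\ key c2 = (S (dep J0), S (2 * idx J0)) /\
       unqueried c1 /\ unqueried c2 /\
       (c = false -> consistent f J0 -> 0 <= u <= 1 -> in_ival J0 u ->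
          Rabs (f u - q) <= potential L J0)).

Definition process_spec (L : R) (f : R -> R) (J0 : ival) (u : R) (c : bool)
  (st : list ival) (q : R) (k : nat * nat) (st' : list ival) : Prop :=
  k = key J0 /\ exists new, st' = replace_ival (key J0) new st /\
    Forall (within L) new /\ step_outcome L f J0 u c q new.

Lemma process_spec_refine L f J0 u c st q J' :
  key J' = key J0 -> within L J' ->
  (c = false -> consistent f J0 -> 0 <= u <= 1 -> in_ival J0 u ->
     consistent f J' /\ Rabs (f u - q) + potential L J' <= potential L J0) ->
  process_spec L f J0 u c st q (key J0) (replace_ival (key J0) (J' :: nil) st).
Proof.
  intros Hk HJ' Hdrop. split; [reflexivity|]. exists (J' :: nil).
  split; [reflexivity|]. split; [constructor; [exact HJ'|constructor]|]. left; eauto.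
Qed.

Lemma process_spec_bisect L f J0 u c st q c1 c2 :
  key c1 = (S (dep J0), 2 * idx J0)%nat -> key c2 = (S (dep J0), S (2 * idx J0)) ->
  unqueried c1 -> unqueried c2 -> within L c1 -> within L c2 ->
  (c = false -> consistent f J0 -> 0 <= u <= 1 -> in_ival J0 u ->
     Rabs (f u - q) <= potential L J0) ->
  process_spec L f J0 u c st q (key J0) (replace_ival (key J0) (c1 :: c2 :: nil) st).
Proof.
  intros. split; [reflexivity|]. exists (c1 :: c2 :: nil).
  split; [reflexivity|]. split; [repeat (constructor; [assumption|]); constructor|]. right.
  exists c1, c2. split; [reflexivity|]. repeat (split; [assumption|]). assumption.
Qed.

(* The dyadic interval with key [b] lies inside the one with key [a]. *)
Definition ancestor (a b : nat * nat) : Prop :=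
  (fst a <= fst b)%nat /\ (snd b / 2 ^ (fst b - fst a))%nat = snd a.

Definition incomparable (a b : nat * nat) : Prop := ~ ancestor a b /\ ~ ancestor b a.

Lemma ancestor_refl a : ancestor a a.
Proof. unfold ancestor. rewrite Nat.sub_diag. split; [lia|apply Nat.div_1_r]. Qed.

Lemma ancestor_trans a b c : ancestor a b -> ancestor b c -> ancestor a c.
Proof.
  intros [Hab Eab] [Hbc Ebc]. split; [lia|].
  replace (fst c - fst a)%nat with (fst c - fst b + (fst b - fst a))%nat by lia.
  rewrite Nat.pow_add_r, <- Nat.Div0.div_div, Ebc. exact Eab.
Qed.

Lemma ancestor_of_common_descendant p k c :
  ancestor p c -> ancestor k c -> (fst p <= fst k)%nat -> ancestor p k.
Proof.
  intros [Hpc Epc] [Hkc Ekc] Hpk. split; [exact Hpk|].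
  rewrite <- Ekc, Nat.Div0.div_div, <- Nat.pow_add_r.
  replace (fst c - fst k + (fst k - fst p))%nat with (fst c - fst p)%nat by lia.
  exact Epc.
Qed.

Lemma ancestor_same_depth a b : ancestor a b -> fst a = fst b -> a = b.
Proof.
  intros [_ E] Hd. rewrite Hd, Nat.sub_diag, Nat.div_1_r in E.
  destruct a, b; simpl in *; congruence.
Qed.

Lemma ancestor_left_child d i : ancestor (d, i) (S d, 2 * i)%nat.
Proof.
  split; cbn [fst snd]; [lia|]. replace (S d - d)%nat with 1%nat by lia.
  rewrite Nat.pow_1_r, Nat.mul_comm. apply Nat.div_mul. lia.
Qed.

Lemma ancestor_right_child d i : ancestor (d, i) (S d, S (2 * i))%nat.
Proof.
  split; cbn [fst snd]; [lia|]. replace (S d - d)%nat with 1%nat by lia.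
  rewrite Nat.pow_1_r.
  replace (S (2 * i)) with (1 + i * 2)%nat by lia.
  rewrite Nat.div_add by lia. reflexivity.
Qed.

Definition is_child (J0 J : ival) : Prop :=
  key J = (S (dep J0), 2 * idx J0)%nat \/ key J = (S (dep J0), S (2 * idx J0)).

Lemma is_child_ancestor J0 J : is_child J0 J ->
  ancestor (key J0) (key J) /\ fst (key J) = S (fst (key J0)).
Proof.
  intros [-> | ->]; split; try reflexivity; [apply ancestor_left_child|apply ancestor_right_child].
Qed.

Lemma incomparable_sym a b : incomparable a b -> incomparable b a.
Proof. unfold incomparable; tauto. Qed.

Lemma incomparable_neq a b : incomparable a b -> a <> b.
Proof. intros [H _] ->. exact (H (ancestor_refl b)). Qed.

Lemma incomparable_same_depth a b : fst a = fst b -> a <> b -> incomparable a b.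
Proof.
  intros Hd Hne. split; intros H; apply Hne; [|symmetry]; apply ancestor_same_depth; auto.
Qed.

Lemma child_incomparable k c p :
  ancestor k c -> fst c = S (fst k) -> incomparable k p -> incomparable c p.
Proof.
  intros Hkc Hd [Hkp Hpk]. split.
  - intros Hcp. exact (Hkp (ancestor_trans _ _ _ Hkc Hcp)).
  - intros Hpc. destruct (Nat.eq_dec (fst p) (fst c)) as [E|E].
    + rewrite <- (ancestor_same_depth _ _ Hpc E) in Hkc. exact (Hkp Hkc).
    + apply Hpk, (ancestor_of_common_descendant p k c); [exact Hpc|exact Hkc|].
      destruct Hpc. lia.
Qed.

Lemma ForallOrdPairs_Permutation {A} (Rel : A -> A -> Prop) l l' :
  (forall a b, Rel a b -> Rel b a) ->
  Permutation l l' -> ForallOrdPairs Rel l -> ForallOrdPairs Rel l'.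
Proof.
  intros Hsym Hp. induction Hp as [|a l l' Hp IH|a b l|l l' l'' _ IH1 _ IH2].
  - trivial.
  - intros Hl. inversion Hl as [|? ? Ha Hr]; subst.
    constructor; [exact (Permutation_Forall Hp Ha)|exact (IH Hr)].
  - intros Hl. inversion Hl as [|? ? Hb Hr]; subst.
    inversion Hr as [|? ? Ha Hr']; subst. inversion Hb; subst.
    constructor; [constructor; auto|constructor; auto].
  - intros; auto.
Qed.

Lemma incomparable_middle A J0 B :
  ForallOrdPairs incomparable (map key (A ++ J0 :: B)) ->
  Forall (incomparable (key J0)) (map key (A ++ B)) /\
  ForallOrdPairs incomparable (map key (A ++ B)).
Proof.
  intros H. apply ForallOrdPairs_Permutation with (l' := map key (J0 :: A ++ B)) in H;
    [|exact incomparable_sym|apply Permutation_map, Permutation_sym, Permutation_middle].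
  inversion H; subst. split; assumption.
Qed.

Lemma key_eqb_true a b : key_eqb a b = true <-> a = b.
Proof.
  unfold key_eqb. rewrite andb_true_iff, !Nat.eqb_eq. destruct a, b; simpl.
  split; [intros [-> ->]; reflexivity|intros E; injection E; auto].
Qed.

Lemma key_eqb_refl a : key_eqb a a = true.
Proof. apply key_eqb_true. reflexivity. Qed.

Lemma key_eqb_neq a b : a <> b -> key_eqb a b = false.
Proof. intros H. destruct (key_eqb a b) eqn:E; [apply key_eqb_true in E; tauto|reflexivity]. Qed.

Lemma replace_ival_absent k new l :
  (forall J, In J l -> key J <> k) -> replace_ival k new l = l.
Proof.
  induction l as [|J l IH]; simpl; intros H; [reflexivity|].
  rewrite key_eqb_neq by (apply H; auto). rewrite IH; auto.
Qed.

Lemma replace_ival_middle A J0 B new :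
  (forall J, In J (A ++ B) -> key J <> key J0) ->
  replace_ival (key J0) new (A ++ J0 :: B) = A ++ new ++ B.
Proof.
  intros H. unfold replace_ival. rewrite flat_map_app. simpl. rewrite key_eqb_refl.
  fold (replace_ival (key J0) new A) (replace_ival (key J0) new B).
  rewrite !replace_ival_absent; auto; intros; apply H, in_or_app; auto.
Qed.

Definition well_formed (L : R) (st : list ival) : Prop :=
  ForallOrdPairs incomparable (map key st) /\
  forall J, In J st -> (3 <= dep J)%nat /\ within L J.

Lemma well_formed_ancestor_eq L st J J' : well_formed L st -> In J st -> In J' st ->
  ancestor (key J) (key J') -> key J = key J'.
Proof.
  intros [Hinc _] HJ HJ' Ha.
  destruct (ForallOrdPairs_In Hinc (key J) (key J') (in_map key _ _ HJ) (in_map key _ _ HJ'))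
    as [E|[[H _]|[_ H]]]; tauto.
Qed.

Lemma incomparable_siblings d n i :
  ForallOrdPairs incomparable (map (fun j => (d, j)) (seq i n)).
Proof.
  revert i. induction n as [|n IH]; intros i; constructor; [|apply IH].
  apply Forall_forall. intros b Hb. apply in_map_iff in Hb as (j & <- & Hj).
  apply in_seq in Hj. apply incomparable_same_depth; [reflexivity|].
  intros E. injection E. lia.
Qed.

Lemma well_formed_init L : 0 < L -> well_formed L (init_state L).
Proof.
  intros HL. split.
  - unfold init_state. rewrite map_map. exact (incomparable_siblings 3 8 0).
  - intros J HJ. unfold init_state in HJ. apply in_map_iff in HJ as (i & <- & _).
    split; [simpl; lia|unfold within; simpl; repeat split; lra].
Qed.

Lemma step_outcome_descendants L f J0 u c q new : step_outcome L f J0 u c q new ->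
  (exists J2, In J2 new) /\ forall J, In J new -> ancestor (key J0) (key J).
Proof.
  intros [(J' & -> & Hk & _)|(c1 & c2 & -> & K1 & K2 & _)].
  - split; [exists J'; left; reflexivity|]. intros J [<-|[]]. rewrite Hk. apply ancestor_refl.
  - split; [exists c1; left; reflexivity|].
    intros J [<-|[<-|[]]]; apply is_child_ancestor; [left|right]; assumption.
Qed.

Lemma step_outcome_incomparable L f J0 u c q new ks : step_outcome L f J0 u c q new ->
  Forall (incomparable (key J0)) ks -> ForallOrdPairs incomparable ks ->
  ForallOrdPairs incomparable (map key new ++ ks).
Proof.
  intros [(J' & -> & Hk & _)|(c1 & c2 & -> & K1 & K2 & _)] HJ0 Hks; simpl.
  - rewrite Hk. constructor; assumption.
  - assert (Hchild : forall ch, is_child J0 ch -> Forall (incomparable (key ch)) ks).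
    { intros ch Hch. destruct (is_child_ancestor J0 ch Hch) as [Ha Hd].
      apply Forall_impl with (P := incomparable (key J0)); [|exact HJ0].
      intros p. exact (child_incomparable _ _ p Ha Hd). }
    pose proof (Hchild c1 (or_introl K1)). pose proof (Hchild c2 (or_intror K2)).
    constructor; [constructor|constructor]; auto.
    rewrite K1, K2. apply incomparable_same_depth; [reflexivity|intros E; injection E; lia].
Qed.

Section Partition.
Variables (L : R) (f : R -> R).
Hypothesis HL : 0 < L.
Hypothesis Hf : forall u, 0 <= u <= 1 -> 0 <= f u <= L.
Hypothesis Hlip : forall u v, 0 <= u <= 1 -> 0 <= v <= 1 ->
  Rabs (f u - f v) <= L * Rabs (u - v).

Lemma lipschitz_in_ival J u v : 0 <= u <= 1 -> 0 <= v <= 1 -> in_ival J u -> in_ival J v ->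
  f u - L * ilen J <= f v <= f u + L * ilen J.
Proof.
  intros Hu Hv Iu Iv. unfold in_ival in *.
  assert (Huv : L * Rabs (v - u) <= L * ilen J).
  { apply Rmult_le_compat_l; [lra|]. apply Rabs_le. split; lra. }
  pose proof (Hlip v u Hv Hu). pose proof (Rle_abs (f v - f u)).
  pose proof (Rle_abs (f u - f v)) as Hvu. rewrite Rabs_minus_sym in Hvu. lra.
Qed.

Lemma checked_range_sound J d yl yh :
  checked_range L (L * ilen J) (Slo J) (Shi J) d = (yl, yh) ->
  (d = false -> exists u0, 0 <= u0 <= 1 /\ in_ival J u0 /\ Slo J <= f u0) ->
  (d = false -> exists u1, 0 <= u1 <= 1 /\ in_ival J u1 /\ f u1 < Shi J) ->
  forall u, 0 <= u <= 1 -> in_ival J u -> yl <= f u <= yh.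
Proof.
  intros E Hw0 Hw1 u Hu Iu. pose proof (Hf u Hu).
  destruct d; injection E as <- <-; [lra|].
  destruct (Hw0 eq_refl) as (u0 & Hu0 & Iu0 & H0), (Hw1 eq_refl) as (u1 & Hu1 & Iu1 & H1).
  pose proof (lipschitz_in_ival J u0 u Hu0 Hu Iu0 Iu).
  pose proof (lipschitz_in_ival J u1 u Hu1 Hu Iu1 Iu). minmax_lra.
Qed.

Lemma process_midpoint_spec T J0 u c st q k st' :
  qlo J0 = true -> qhi J0 = true -> (3 <= dep J0)%nat -> within L J0 ->
  process L T f J0 u c st = (q, k, st') -> process_spec L f J0 u c st q k st'.
Proof.
  intros Elo Ehi Hd (HSlo & HShi & Ha & Hb) E. pose proof (ilen_gt0 J0).
  assert (Hm : 0 < L * ilen J0) by nra.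
  unfold process in E. rewrite Elo, Ehi in E. simpl in E.
  match type of E with context [let '(_, _) := ?P in _] => destruct P as [yl yh] eqn:EY end.
  destruct (midpoint_update_within L (L * ilen J0) _ _ _ yl yh (Rlt_le _ _ Hm) Ha Hb EY)
    as [Hyl Hyh].
  assert (Hsound : c = false -> consistent f J0 -> 0 <= u <= 1 -> in_ival J0 u ->
    Rabs (f u - (Ylo J0 + Yhi J0) / 2) <= (Yhi J0 - Ylo J0) / 2 /\
    yh - yl <= (Yhi J0 - Ylo J0) / 2 + L * ilen J0 /\
    forall v, 0 <= v <= 1 -> in_ival J0 v -> yl <= f v <= yh).
  { intros -> (_ & _ & HY) Hu Iu. rewrite !xorb_false_r in EY.
    pose proof (HY Elo Ehi u Hu Iu) as Hfu.
    destruct (midpoint_update_sound L (L * ilen J0) (Ylo J0) (Yhi J0) (f u) yl yh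
      ltac:(lra) ltac:(lra) Hfu EY) as [Hlen Hin].
    split; [apply Rabs_le; split; lra|]. split; [exact Hlen|].
    intros v Hv Iv. apply Hin; [exact (HY Elo Ehi v Hv Iv)|].
    exact (lipschitz_in_ival J0 u v Hu Hv Iu Iv). }
  destruct (Rltb (yh - yl) _) eqn:Eb; injection E as <- <- <-.
  - apply process_spec_bisect; try reflexivity; try (split; reflexivity);
      try (unfold within; simpl; repeat split; lra).
    intros Hc FJ Hu Iu. destruct (Hsound Hc FJ Hu Iu) as (Hloss & _).
    pose proof (Rabs_pos (f u - (Ylo J0 + Yhi J0) / 2)).
    pose proof (Rmax_l (Yhi J0 - Ylo J0) (4 * L * ilen J0)).
    unfold potential. rewrite Elo, Ehi. simpl. lra.
  - apply process_spec_refine; [reflexivity|unfold within; simpl; repeat split; lra|].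
    intros Hc FJ Hu Iu. destruct (Hsound Hc FJ Hu Iu) as (Hloss & Hlen & Hin).
    assert (Hge : 4 * (L * ilen J0) <= yh - yl).
    { unfold Rltb in Eb. destruct Rlt_dec in Eb; [discriminate|]. minmax_lra. }
    destruct FJ as (Hwlo & Hwhi & _). split.
    + split; [|split]; simpl; auto.
    + unfold potential. rewrite Elo, Ehi. simpl.
      change (ilen (mkI _ _ _ _ _ _ _ _ _)) with (ilen J0).
      replace (4 * L * ilen J0) with (4 * (L * ilen J0)) by ring.
      pose proof (midpoint_potential_drop _ _ _ _ Hm Hloss Hlen Hge). lra.
Qed.

Lemma process_check_hi_spec T J0 u c st q k st' :
  qlo J0 = true -> qhi J0 = false -> (3 <= dep J0)%nat -> within L J0 ->
  process L T f J0 u c st = (q, k, st') -> process_spec L f J0 u c st q k st'.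
Proof.
  intros Elo Ehi Hd (HSlo & HShi & Ha & Hb) E. pose proof (ilen_gt0 J0).
  unfold process in E. rewrite Elo, Ehi in E. simpl in E.
  match type of E with context [let '(_, _) := ?P in _] => destruct P as [yl yh] eqn:EY end.
  destruct (checked_range_within L (L * ilen J0) _ _ _ yl yh HL ltac:(nra) HSlo HShi EY)
    as [Hyl Hyh].
  injection E as <- <- <-.
  apply process_spec_refine; [reflexivity|unfold within; simpl; repeat split; lra|].
  intros -> (Hwlo & _ & _) Hu Iu. rewrite !xorb_false_r in EY |- *.
  assert (Hw0 : dub J0 || negb (sgn01 (Shi J0 - f u)) = false ->
    exists u0, 0 <= u0 <= 1 /\ in_ival J0 u0 /\ Slo J0 <= f u0).
  { intros Hdub. apply orb_false_elim in Hdub as [Hdub _]. exact (Hwlo Elo Hdub). }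
  assert (Hw1 : dub J0 || negb (sgn01 (Shi J0 - f u)) = false ->
    exists u1, 0 <= u1 <= 1 /\ in_ival J0 u1 /\ f u1 < Shi J0).
  { intros Hdub. apply orb_false_elim in Hdub as [_ Hs].
    apply negb_false_iff, sgn01_true in Hs. exists u. split; [exact Hu|split; [exact Iu|lra]]. }
  split.
  - split; [|split]; simpl; intros _; [exact Hw0|exact Hw1|intros _].
    exact (checked_range_sound J0 _ yl yh EY Hw0 Hw1).
  - match goal with |- _ + potential L ?J' <= _ =>
      pose proof (potential_answer_drop L J0 J' HL Hd Hyl Hyh ltac:(simpl; auto)) end.
    pose proof (Rabs_sub_le_bound (f u) (Shi J0) L (Hf u Hu) HShi). lra.
Qed.

Lemma process_check_lo_spec T J0 u c st q k st' :
  qlo J0 = false -> (3 <= dep J0)%nat -> within L J0 ->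
  process L T f J0 u c st = (q, k, st') -> process_spec L f J0 u c st q k st'.
Proof.
  intros Elo Hd (HSlo & HShi & Ha & Hb) E. pose proof (ilen_gt0 J0).
  unfold process in E. rewrite Elo in E. simpl in E.
  destruct (qhi J0) eqn:Ehi.
  - match type of E with context [let '(_, _) := ?P in _] => destruct P as [yl yh] eqn:EY end.
    destruct (checked_range_within L (L * ilen J0) _ _ _ yl yh HL ltac:(nra) HSlo HShi EY)
      as [Hyl Hyh].
    injection E as <- <- <-.
    apply process_spec_refine; [reflexivity|unfold within; simpl; repeat split; lra|].
    intros -> (_ & Hwhi & _) Hu Iu. rewrite !xorb_false_r in EY |- *.
    assert (Hw0 : dub J0 || sgn01 (Slo J0 - f u) = false ->
      exists u0, 0 <= u0 <= 1 /\ in_ival J0 u0 /\ Slo J0 <= f u0).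
    { intros Hdub. apply orb_false_elim in Hdub as [_ Hs].
      apply sgn01_false in Hs. exists u. split; [exact Hu|split; [exact Iu|lra]]. }
    assert (Hw1 : dub J0 || sgn01 (Slo J0 - f u) = false ->
      exists u1, 0 <= u1 <= 1 /\ in_ival J0 u1 /\ f u1 < Shi J0).
    { intros Hdub. apply orb_false_elim in Hdub as [Hdub _]. exact (Hwhi Ehi Hdub). }
    split.
    + split; [|split]; simpl; intros _; [exact Hw0|exact Hw1|intros _].
      exact (checked_range_sound J0 _ yl yh EY Hw0 Hw1).
    + match goal with |- _ + potential L ?J' <= _ =>
        pose proof (potential_answer_drop L J0 J' HL Hd Hyl Hyh ltac:(simpl; auto)) end.
      pose proof (Rabs_sub_le_bound (f u) (Slo J0) L (Hf u Hu) HSlo). lra.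
  - injection E as <- <- <-.
    apply process_spec_refine; [reflexivity|unfold within; simpl; repeat split; lra|].
    intros -> _ Hu Iu. split.
    + split; [|split]; simpl; try discriminate. intros _ Hdub.
      apply orb_false_elim in Hdub as [_ Hs]. rewrite xorb_false_r in Hs.
      apply sgn01_false in Hs. exists u. split; [exact Hu|split; [exact Iu|lra]].
    + match goal with |- _ + potential L ?J' <= _ =>
        pose proof (potential_answer_drop L J0 J' HL Hd Ha Hb ltac:(simpl; auto)) end.
      pose proof (Rabs_sub_le_bound (f u) (Slo J0) L (Hf u Hu) HSlo). lra.
Qed.

Lemma process_meets_spec T J0 u c st q k st' :
  (3 <= dep J0)%nat -> within L J0 ->
  process L T f J0 u c st = (q, k, st') -> process_spec L f J0 u c st q k st'.
Proof.
  destruct (qlo J0) eqn:Elo; [destruct (qhi J0) eqn:Ehi|].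
  - apply process_midpoint_spec; assumption.
  - apply process_check_hi_spec; assumption.
  - apply process_check_lo_spec; assumption.
Qed.

Lemma round_cases T st u c q k st' : well_formed L st ->
  round L T f st u c = (q, k, st') ->
  (st' = st /\ k = (0, 0)%nat) \/
  exists J0 A B new, st = A ++ J0 :: B /\ st' = A ++ new ++ B /\ k = key J0 /\
    icontains J0 u = true /\ Forall (incomparable (key J0)) (map key (A ++ B)) /\
    Forall (within L) new /\ step_outcome L f J0 u c q new.
Proof.
  intros [Hinc Hdep] E. unfold round in E.
  destruct (find (fun J0 => icontains J0 u) st) as [J0|] eqn:Ef;
    [|left; injection E; auto].
  right. apply find_some in Ef as [HJ0 Hc]. destruct (Hdep J0 HJ0) as [Hd Hw].
  destruct (process_meets_spec T J0 u c st q k st' Hd Hw E)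
    as (-> & new & -> & Hnew & Hout).
  destruct (in_split _ _ HJ0) as (A & B & ->).
  destruct (incomparable_middle A J0 B Hinc) as [HJ0AB _].
  exists J0, A, B, new. repeat split; auto.
  apply replace_ival_middle. intros J HJ E'. rewrite Forall_forall in HJ0AB.
  apply (incomparable_neq (key J0) (key J)); [apply HJ0AB, in_map, HJ|symmetry; exact E'].
Qed.

Lemma round_well_formed T st u c q k st' : well_formed L st ->
  round L T f st u c = (q, k, st') -> well_formed L st'.
Proof.
  intros Hwf E.
  destruct (round_cases T st u c q k st' Hwf E)
    as [[-> _]|(J0 & A & B & new & -> & -> & _ & _ & HJ0AB & Hnew & Hout)]; [exact Hwf|].
  destruct Hwf as [Hinc Hdep]. destruct (incomparable_middle A J0 B Hinc) as [_ HAB].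
  assert (HJ0 : In J0 (A ++ J0 :: B)) by (apply in_or_app; right; left; reflexivity).
  destruct (step_outcome_descendants _ _ _ _ _ _ _ Hout) as [_ Hdesc]. split.
  - apply ForallOrdPairs_Permutation with (l := map key (new ++ A ++ B));
      [exact incomparable_sym|apply Permutation_map, Permutation_app_swap_app|].
    rewrite map_app. apply (step_outcome_incomparable _ _ _ _ _ _ _ _ Hout HJ0AB HAB).
  - intros J HJ. apply in_app_or in HJ as [HJ|HJ]; [apply Hdep, in_or_app; auto|].
    apply in_app_or in HJ as [HJ|HJ]; [|apply Hdep, in_or_app; right; right; exact HJ].
    split; [|rewrite Forall_forall in Hnew; auto].
    destruct (Hdep J0 HJ0) as [Hd _]. destruct (Hdesc J HJ) as [Hle _]. simpl in Hle. lia.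
Qed.

Lemma round_refines T st u c q k st' : well_formed L st ->
  round L T f st u c = (q, k, st') ->
  forall J, In J st -> exists J2, In J2 st' /\ ancestor (key J) (key J2).
Proof.
  intros Hwf E J HJ.
  destruct (round_cases T st u c q k st' Hwf E)
    as [[-> _]|(J0 & A & B & new & -> & -> & _ & _ & _ & _ & Hout)];
    [exists J; split; [exact HJ|apply ancestor_refl]|].
  apply in_app_or in HJ as [HJ|[<-|HJ]].
  - exists J. split; [apply in_or_app; left; exact HJ|apply ancestor_refl].
  - destruct (step_outcome_descendants _ _ _ _ _ _ _ Hout) as [(J2 & HJ2) Hdesc].
    exists J2. split; [apply in_or_app; right; apply in_or_app; left; exact HJ2|auto].
  - exists J. split; [|apply ancestor_refl].
    apply in_or_app; right; apply in_or_app; right; exact HJ.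
Qed.
End Partition.

Fixpoint sum_ival (g : ival -> R) (l : list ival) : R :=
  match l with nil => 0 | J :: l => g J + sum_ival g l end.

Lemma sum_ival_app g l1 l2 : sum_ival g (l1 ++ l2) = sum_ival g l1 + sum_ival g l2.
Proof. induction l1 as [|J l1 IH]; simpl; [lra|rewrite IH; lra]. Qed.

Lemma sum_ival_ext g1 g2 l : (forall J, In J l -> g1 J = g2 J) -> sum_ival g1 l = sum_ival g2 l.
Proof. induction l as [|J l IH]; simpl; intros H; [reflexivity|rewrite H, IH; auto]. Qed.

Lemma sum_ival_zero g l : (forall J, In J l -> g J = 0) -> sum_ival g l = 0.
Proof. induction l as [|J l IH]; simpl; intros H; [reflexivity|rewrite H, IH; auto; lra]. Qed.

Lemma sum_ival_ge0 g l : (forall J, In J l -> 0 <= g J) -> 0 <= sum_ival g l.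
Proof.
  induction l as [|J l IH]; simpl; intros H; [lra|].
  pose proof (H J (or_introl eq_refl)). pose proof (IH (fun J' HJ' => H J' (or_intror HJ'))).
  lra.
Qed.

Lemma fold_right_Rplus_init c l : fold_right Rplus c l = c + fold_right Rplus 0 l.
Proof. induction l as [|a l IH]; simpl; [lra|rewrite IH; lra]. Qed.

Section Run.
Variables (L : R) (T : nat) (f : R -> R) (x : nat -> R) (corr : nat -> bool).
Hypothesis HL : 0 < L.
Hypothesis Hf : forall u, 0 <= u <= 1 -> 0 <= f u <= L.
Hypothesis Hlip : forall u v, 0 <= u <= 1 -> 0 <= v <= 1 ->
  Rabs (f u - f v) <= L * Rabs (u - v).
Hypothesis Hx : forall t, 0 <= x t <= 1.

Notation st n := (run L T f x corr n).
Notation round_at n := (round L T f (st n) (x (S n)) (corr (S n))).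
Notation kt t := (lies_in L T f x corr t).
Notation cr k := (correcting L T f x corr k).

Lemma run_S n : st (S n) = snd (round_at n).
Proof. simpl. destruct (round _ _ _ _ _ _) as [[? ?] ?]; reflexivity. Qed.

Lemma lies_in_S n : kt (S n) = snd (fst (round_at n)).
Proof.
  unfold lies_in. rewrite Nat.sub_succ, Nat.sub_0_r.
  destruct (round _ _ _ _ _ _) as [[? ?] ?]; reflexivity.
Qed.

Lemma guess_S n : guess L T f x corr (S n) = fst (fst (round_at n)).
Proof.
  unfold guess. rewrite Nat.sub_succ, Nat.sub_0_r.
  destruct (round _ _ _ _ _ _) as [[? ?] ?]; reflexivity.
Qed.

Lemma run_well_formed n : well_formed L (st n).
Proof.
  induction n as [|n IH]; [exact (well_formed_init L HL)|].
  rewrite run_S. destruct (round _ _ _ _ _ _) as [[q k] st'] eqn:E.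
  exact (round_well_formed L f HL Hf Hlip T _ _ _ _ _ _ IH E).
Qed.

Lemma run_refines m n : (m <= n)%nat ->
  forall J, In J (st m) -> exists J2, In J2 (st n) /\ ancestor (key J) (key J2).
Proof.
  induction 1 as [|n Hmn IH]; intros J HJ; [exists J; split; [exact HJ|apply ancestor_refl]|].
  destruct (IH J HJ) as (J1 & HJ1 & A1). rewrite run_S.
  destruct (round _ _ _ _ _ _) as [[q k] st'] eqn:E.
  destruct (round_refines L f HL Hf Hlip T _ _ _ _ _ _ (run_well_formed n) E J1 HJ1)
    as (J2 & HJ2 & A2).
  exists J2. split; [exact HJ2|exact (ancestor_trans _ _ _ A1 A2)].
Qed.

(* The key [(0, 0)] is the junk value of [round] when no interval contains
   the context; it is never the key of a partition interval. *)
Lemma lies_in_partition n :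
  kt (S n) = (0, 0)%nat \/ exists J, In J (st n) /\ key J = kt (S n).
Proof.
  rewrite lies_in_S. destruct (round _ _ _ _ _ _) as [[q k] st'] eqn:E. simpl.
  destruct (round_cases L f HL Hf Hlip T _ _ _ _ _ _ (run_well_formed n) E)
    as [[_ ->]|(J0 & A & B & new & -> & _ & -> & _)]; [left; reflexivity|].
  right. exists J0. split; [apply in_or_app; right; left|]; reflexivity.
Qed.

Lemma no_round_below n J0 cc s : In J0 (st n) -> ancestor (key J0) cc ->
  (fst (key J0) < fst cc)%nat -> (1 <= s <= n)%nat -> kt s <> cc.
Proof.
  intros HJ0 Ha Hd Hs Hk. destruct s as [|s]; [lia|].
  destruct (lies_in_partition s) as [E|(J & HJ & Hkey)].
  - rewrite Hk in E. rewrite E in Hd. simpl in Hd. lia.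
  - destruct (run_refines s n ltac:(lia) J HJ) as (J3 & HJ3 & A3).
    rewrite Hkey, Hk in A3.
    pose proof (well_formed_ancestor_eq L _ J0 J3 (run_well_formed n) HJ0 HJ3
      (ancestor_trans _ _ _ Ha A3)) as E.
    destruct A3 as [Hd3 _]. rewrite E in Hd. lia.
Qed.

Lemma no_round_after_split n J0 C s : In J0 (st n) -> In C (st (S n)) ->
  ancestor (key J0) (key C) -> (fst (key J0) < fst (key C))%nat ->
  (S n < s)%nat -> kt s <> key J0.
Proof.
  intros HJ0 HC Ha Hd Hs Hk. destruct s as [|s]; [lia|].
  destruct (run_well_formed n) as [_ Hdep]. destruct (Hdep J0 HJ0) as [Hd3 _].
  destruct (lies_in_partition s) as [E|(J & HJ & Hkey)].
  - rewrite Hk in E. injection E. lia.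
  - destruct (run_refines (S n) s ltac:(lia) C HC) as (J3 & HJ3 & A3).
    rewrite Hk in Hkey.
    pose proof (well_formed_ancestor_eq L _ J J3 (run_well_formed s) HJ HJ3) as E.
    rewrite Hkey in E. specialize (E (ancestor_trans _ _ _ Ha A3)).
    destruct A3 as [Hd4 _]. rewrite E in Hd. lia.
Qed.

Lemma correcting_round_uncorrupted k t : cr k = true -> (1 <= t <= T)%nat ->
  kt t = k -> corr t = false.
Proof.
  intros H Ht Hk. apply andb_true_iff in H as [_ H]. rewrite forallb_forall in H.
  specialize (H t ltac:(apply in_seq; lia)). rewrite Hk, key_eqb_refl in H.
  destruct (corr t); [discriminate|reflexivity].
Qed.

Lemma correcting_consistent n : (n <= T)%nat ->
  forall J, In J (st n) -> cr (key J) = true -> consistent f J.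
Proof.
  induction n as [|n IH]; intros Hn J HJ Hc.
  - unfold init_state in HJ. apply in_map_iff in HJ as (i & <- & _). discriminate.
  - revert HJ. rewrite run_S. pose proof (lies_in_S n) as Hk.
    destruct (round _ _ _ _ _ _) as [[q k] st'] eqn:E. simpl in *. intros HJ.
    destruct (round_cases L f HL Hf Hlip T _ _ _ _ _ _ (run_well_formed n) E)
      as [[-> ->]|(J0 & A & B & new & Est & -> & -> & Hic & _ & _ & Hout)];
      [apply IH; auto; lia|].
    assert (Hin : forall J', In J' (A ++ J0 :: B) -> In J' (st n)) by (rewrite Est; auto).
    apply in_app_or in HJ as [HJ|HJ];
      [apply IH; [lia|apply Hin, in_or_app; left; exact HJ|exact Hc]|].
    apply in_app_or in HJ as [HJ|HJ];
      [|apply IH; [lia|apply Hin, in_or_app; right; right; exact HJ|exact Hc]].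
    destruct Hout as [(J' & -> & Hkey & Hstep)|(c1 & c2 & -> & _ & _ & U1 & U2 & _)].
    + destruct HJ as [<-|[]]. rewrite Hkey in Hc.
      assert (Hc0 : corr (S n) = false)
        by (apply (correcting_round_uncorrupted (key J0)); auto; lia).
      apply Hstep; auto.
      * apply IH; [lia|apply Hin, in_or_app; right; left; reflexivity|exact Hc].
      * apply icontains_in_ival; exact Hic.
    + destruct HJ as [<-|[<-|[]]]; apply unqueried_consistent; assumption.
Qed.

(* [corrupted L T f x corr k] is [corrupted_by k T]. *)
Definition corrupted_by (k : nat * nat) (n : nat) : bool :=
  existsb (fun s => key_eqb (kt s) k && corr s) (seq 1 n).

Lemma corrupted_by_S k n :
  corrupted_by k (S n) = corrupted_by k n || (key_eqb (kt (S n)) k && corr (S n)).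
Proof.
  unfold corrupted_by. rewrite seq_S, existsb_app. simpl. rewrite orb_false_r. reflexivity.
Qed.

Lemma corrupted_by_spec k n : corrupted_by k n = true <->
  exists s, (1 <= s <= n)%nat /\ kt s = k /\ corr s = true.
Proof.
  unfold corrupted_by. rewrite existsb_exists. split.
  - intros (s & Hs & H). apply in_seq in Hs. apply andb_true_iff in H as [H1 H2].
    apply key_eqb_true in H1. exists s. split; [lia|auto].
  - intros (s & Hs & Hk & Hc). exists s. split; [apply in_seq; lia|].
    rewrite Hk, Hc, key_eqb_refl. reflexivity.
Qed.

Lemma correcting_parent_corrupted J0 ch :
  is_child J0 ch -> cr (key ch) = true -> corrupted_by (key J0) T = true.
Proof.
  intros Hch Hc. apply andb_true_iff in Hc as [Hc _]. apply andb_true_iff in Hc as [_ Hc].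
  destruct Hch as [E|E]; rewrite E in Hc; cbn [fst snd Nat.pred] in Hc;
    [rewrite Nat.div2_double in Hc|rewrite Nat.div2_succ_double in Hc]; exact Hc.
Qed.

(* A corrupted interval holds a reserve of [12 L]: it pays for the potentials
   [6 L + 6 L] of its two children, which start being counted when they turn
   out to be correcting. *)
Definition local_potential (n : nat) (J : ival) : R :=
  (if cr (key J) then potential L J else 0) +
  (if corrupted_by (key J) n then 12 * L else 0).

Definition total_potential (n : nat) : R := sum_ival (local_potential n) (st n).

Definition correcting_round_loss (t : nat) : R :=
  if cr (kt t) then Rabs (f (x t) - guess L T f x corr t) else 0.

Lemma local_potential_ge0 n J : 0 <= local_potential n J.
Proof.
  unfold local_potential. pose proof (potential_ge0 L J HL).
  destruct (cr _), (corrupted_by _ _); lra.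
Qed.

Lemma local_potential_S n J :
  kt (S n) <> key J -> local_potential (S n) J = local_potential n J.
Proof.
  intros Hne. unfold local_potential. rewrite corrupted_by_S, (key_eqb_neq _ _ Hne).
  rewrite andb_false_l, orb_false_r. reflexivity.
Qed.

Lemma total_potential_0 : total_potential 0 = 0.
Proof.
  apply sum_ival_zero. intros J HJ. unfold init_state in HJ.
  apply in_map_iff in HJ as (i & <- & _). unfold local_potential. simpl. lra.
Qed.

Lemma refine_potential_step n J0 J' q : (S n <= T)%nat -> In J0 (st n) ->
  kt (S n) = key J0 -> key J' = key J0 -> icontains J0 (x (S n)) = true ->
  (corr (S n) = false -> consistent f J0 -> 0 <= x (S n) <= 1 -> in_ival J0 (x (S n)) ->
     consistent f J' /\ Rabs (f (x (S n)) - q) + potential L J' <= potential L J0) ->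
  (if cr (key J0) then Rabs (f (x (S n)) - q) else 0) + local_potential (S n) J'
    <= local_potential n J0 + (if corr (S n) then 12 * L else 0).
Proof.
  intros Hn HJ0 Hk HkJ' Hic Hstep. unfold local_potential.
  rewrite HkJ', corrupted_by_S, Hk, key_eqb_refl, andb_true_l.
  destruct (cr (key J0)) eqn:Hc.
  - assert (Hc0 : corr (S n) = false)
      by (apply (correcting_round_uncorrupted (key J0)); auto; lia).
    destruct (Hstep Hc0 (correcting_consistent n ltac:(lia) J0 HJ0 Hc) (Hx _)
      (icontains_in_ival _ _ Hic)) as [_ Hdrop].
    rewrite Hc0. destruct (corrupted_by _ _); simpl; lra.
  - destruct (corrupted_by _ _), (corr (S n)); simpl; lra.
Qed.

Lemma child_uncorrupted n J0 ch : In J0 (st n) -> kt (S n) = key J0 -> is_child J0 ch ->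
  corrupted_by (key ch) (S n) = false.
Proof.
  intros HJ0 Hk Hch. destruct (is_child_ancestor J0 ch Hch) as [Ha Hd].
  destruct (corrupted_by _ _) eqn:Ec; [|reflexivity].
  apply corrupted_by_spec in Ec as (s & Hs & Hks & _).
  destruct (Nat.eq_dec s (S n)) as [->|Hne].
  - rewrite Hk in Hks. rewrite <- Hks in Hd. lia.
  - exfalso. exact (no_round_below n J0 (key ch) s HJ0 Ha ltac:(lia) ltac:(lia) Hks).
Qed.

Lemma correcting_child_reserve n J0 C ch : In J0 (st n) -> In C (st (S n)) ->
  is_child J0 C -> is_child J0 ch -> cr (key ch) = true ->
  cr (key J0) = false /\ corrupted_by (key J0) n || corr (S n) = true.
Proof.
  intros HJ0 HC HCc Hch Hc.
  destruct (proj1 (corrupted_by_spec _ _) (correcting_parent_corrupted J0 ch Hch Hc))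
    as (s & Hs & Hks & Hcs).
  split.
  - destruct (cr (key J0)) eqn:Hc0; [|reflexivity].
    rewrite (correcting_round_uncorrupted (key J0) s Hc0 Hs Hks) in Hcs. discriminate.
  - assert (Hsn : (s <= S n)%nat).
    { destruct (Nat.le_gt_cases s (S n)) as [|Hgt]; [assumption|].
      destruct (is_child_ancestor J0 C HCc) as [Ha Hd].
      exfalso. exact (no_round_after_split n J0 C s HJ0 HC Ha ltac:(lia) Hgt Hks). }
    destruct (Nat.eq_dec s (S n)) as [<-|Hne]; [rewrite Hcs; apply orb_true_r|].
    apply orb_true_iff. left. apply corrupted_by_spec. exists s. split; [lia|auto].
Qed.

Lemma bisect_potential_step n J0 c1 c2 q : (S n <= T)%nat -> In J0 (st n) ->
  In c1 (st (S n)) -> kt (S n) = key J0 ->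
  key c1 = (S (dep J0), 2 * idx J0)%nat -> key c2 = (S (dep J0), S (2 * idx J0)) ->
  unqueried c1 -> unqueried c2 -> icontains J0 (x (S n)) = true ->
  (corr (S n) = false -> consistent f J0 -> 0 <= x (S n) <= 1 -> in_ival J0 (x (S n)) ->
     Rabs (f (x (S n)) - q) <= potential L J0) ->
  (if cr (key J0) then Rabs (f (x (S n)) - q) else 0) +
  (local_potential (S n) c1 + (local_potential (S n) c2 + 0))
    <= local_potential n J0 + (if corr (S n) then 12 * L else 0).
Proof.
  intros Hn HJ0 HC1 Hk K1 K2 U1 U2 Hic Hloss. unfold local_potential.
  rewrite (child_uncorrupted n J0 c1 HJ0 Hk (or_introl K1)),
    (child_uncorrupted n J0 c2 HJ0 Hk (or_intror K2)),
    (potential_unqueried L c1 U1), (potential_unqueried L c2 U2).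
  destruct (cr (key c1) || cr (key c2)) eqn:Hcc.
  - assert (Hres : cr (key J0) = false /\ corrupted_by (key J0) n || corr (S n) = true).
    { apply orb_true_iff in Hcc as [Hc|Hc];
        [apply (correcting_child_reserve n J0 c1 c1)|apply (correcting_child_reserve n J0 c1 c2)];
        solve [assumption|left; exact K1|right; exact K2]. }
    destruct Hres as [-> Hreserve].
    destruct (cr (key c1)), (cr (key c2)), (corrupted_by (key J0) n), (corr (S n));
      simpl in *; try discriminate; lra.
  - apply orb_false_iff in Hcc as [-> ->].
    destruct (cr (key J0)) eqn:Hc.
    + assert (Hc0 : corr (S n) = false)
        by (apply (correcting_round_uncorrupted (key J0)); auto; lia).
      pose proof (Hloss Hc0 (correcting_consistent n ltac:(lia) J0 HJ0 Hc) (Hx _)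
        (icontains_in_ival _ _ Hic)).
      destruct (corrupted_by _ _), (corr (S n)); lra.
    + pose proof (Rabs_pos (f (x (S n)) - q)).
      destruct (corrupted_by _ _), (corr (S n)); lra.
Qed.

Lemma potential_step n : (S n <= T)%nat ->
  correcting_round_loss (S n) + total_potential (S n)
    <= total_potential n + (if corr (S n) then 12 * L else 0).
Proof.
  intros Hn. unfold correcting_round_loss, total_potential.
  pose proof (lies_in_S n) as Hk. pose proof (guess_S n) as Hq. pose proof (run_S n) as Hr.
  destruct (round _ _ _ _ _ _) as [[q k] st'] eqn:E. cbn [fst snd] in Hk, Hq, Hr.
  rewrite Hr, Hq, Hk. destruct (run_well_formed n) as [_ Hdep].
  destruct (round_cases L f HL Hf Hlip T _ _ _ _ _ _ (run_well_formed n) E)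
    as [[-> ->]|(J0 & A & B & new & Est & -> & -> & Hic & HJ0AB & _ & Hout)].
  - rewrite (sum_ival_ext (local_potential (S n)) (local_potential n));
      [simpl; destruct (corr (S n)); lra|].
    intros J HJ. apply local_potential_S. rewrite Hk. intros E'.
    destruct (Hdep J HJ) as [Hd _]. unfold key in E'. injection E'. lia.
  - assert (HJ0 : In J0 (st n)) by (rewrite Est; apply in_or_app; right; left; reflexivity).
    assert (Hsame : forall J, In J (A ++ B) -> local_potential (S n) J = local_potential n J).
    { intros J HJ. apply local_potential_S. rewrite Hk. apply incomparable_neq.
      rewrite Forall_forall in HJ0AB. apply HJ0AB, in_map, HJ. }
    rewrite Est, !sum_ival_app.
    rewrite (sum_ival_ext _ (local_potential n) A) by (intros; apply Hsame, in_or_app; auto).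
    rewrite (sum_ival_ext _ (local_potential n) B) by (intros; apply Hsame, in_or_app; auto).
    cbn [sum_ival].
    destruct Hout as [(J' & -> & HkJ' & Hstep)|(c1 & c2 & -> & K1 & K2 & U1 & U2 & Hloss)].
    + pose proof (refine_potential_step n J0 J' q Hn HJ0 Hk HkJ' Hic Hstep).
      cbn [sum_ival]. lra.
    + assert (HC1 : In c1 (st (S n))) by (rewrite Hr; apply in_or_app; right; left; reflexivity).
      pose proof (bisect_potential_step n J0 c1 c2 q Hn HJ0 HC1 Hk K1 K2 U1 U2 Hic Hloss).
      cbn [sum_ival]. lra.
Qed.

Lemma correcting_loss_telescope m : (m <= T)%nat ->
  fold_right Rplus 0 (map correcting_round_loss (seq 1 m)) + total_potential m
    <= 12 * L * INR (length (filter corr (seq 1 m))).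
Proof.
  induction m as [|m IH]; intros Hm; [rewrite total_potential_0; simpl; lra|].
  rewrite seq_S, map_app, fold_right_app, filter_app, length_app. simpl.
  rewrite fold_right_Rplus_init, plus_INR.
  pose proof (IH ltac:(lia)). pose proof (potential_step m Hm).
  destruct (corr (S m)); simpl; lra.
Qed.

Lemma correcting_loss_le : correcting_loss L T f x corr <= 12 * L * INR (num_corruptions T corr).
Proof.
  pose proof (correcting_loss_telescope T (le_n T)).
  assert (0 <= total_potential T)
    by (apply sum_ival_ge0; intros; apply local_potential_ge0).
  unfold correcting_loss, num_corruptions, rounds. fold correcting_round_loss. lra.
Qed.
End Run.

Theorem lemma26 :
  exists K : R, 0 < K /\
  forall (L : R) (T C : nat) (f : R -> R) (x : nat -> R) (corr : nat -> bool),
    0 < L -> (2 <= T)%nat ->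
    (forall u, 0 <= u <= 1 -> 0 <= f u <= L) ->
    (forall u v, 0 <= u <= 1 -> 0 <= v <= 1 -> Rabs (f u - f v) <= L * Rabs (u - v)) ->
    (forall t, 0 <= x t <= 1) ->
    (num_corruptions T corr <= C)%nat ->
    correcting_loss L T f x corr <= K * L * INR C.
Proof.
  exists 12. split; [lra|]. intros L T C f x corr HL _ Hf Hlip Hx HC.
  eapply Rle_trans; [apply correcting_loss_le; assumption|].
  apply Rmult_le_compat_l; [lra|]. apply le_INR, HC.
Qed.
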